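(* Let $\mathcal{A}$ be a separating union-closed family with base set $[n]$ and height $h=4$, and let $\mathcal{B}=\{B_1,B_2,B_3\}$ be a choice of $\mathcal{B}(\mathcal{A})$ with $|\mathcal{B}|=3$. Suppose $|B|=n$, where $B=b(\mathcal{A}_{<n/2})$. Then for every $A \in \mathcal{A}_{<n/2} \setminus \mathcal{B}$, we have $\bigcup_{i=1}^3 \mathrm{irr}_{\mathcal{B}}(B_i) \not\subseteq A$.
   Context: A family of sets $\mathcal{A}$ is union-closed if it is a finite family of distinct finite sets with at least one nonempty member set, and $X,Y\in\mathcal{A}$ implies $X\cup Y\in\mathcal{A}$ (the empty set may be a member). For a family $\mathcal{F}$, $b(\mathcal{F})=\bigcup_{F\in\mathcal{F}}F$; the base set $b(\mathcal{A})$ is denoted $[n]=\{1,\dots,n\}$. $\mathcal{A}$ is separating if for any two distinct $x,y\in[n]$ there is $A\in\mathcal{A}$ containing exactly one of $x,y$. A chain in $\mathcal{A}$ is a subfamily any two distinct members of which are comparable under proper inclusion; the height $h$ of $\mathcal{A}$ is the maximum size of a chain in $\mathcal{A}$. For real $x\ge 0$, $\mathcal{A}_{<x}=\{A\in\mathcal{A} : |A|<x\}$. For $\mathcal{S}\subseteq\mathcal{A}$ and $S\in\mathcal{S}$, $\mathrm{irr}_{\mathcal{S}}(S)=\{s\in S : s\notin b(\mathcal{S}\setminus\{S\})\}$, and $\mathcal{S}$ is irredundant if $\mathrm{irr}_{\mathcal{S}}(S)\neq\emptyset$ for every $S\in\mathcal{S}$. With $B=b(\mathcal{A}_{<n/2})$,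 $\mathcal{B}(\mathcal{A})$ denotes any irredundant subfamily of $\mathcal{A}_{<n/2}$ of minimum size such that $b(\mathcal{B}(\mathcal{A}))=B$. *)

(* Families of subsets of the base set [n], modelled as 'I_n. *)
From mathcomp Require Import all_boot.
Set Implicit Arguments. Unset Strict Implicit. Unset Printing Implicit Defensive.

Section UC.
Variable T : finType.
Implicit Types (A S C : {set {set T}}) (X Y : {set T}).

Definition base A : {set T} := \bigcup_(X in A) X.

Definition union_closed A : Prop :=
  (exists2 X, X \in A & X != set0) /\
  (forall X Y, X \in A -> Y \in A -> X :|: Y \in A).

Definition separating A : Prop :=
  forall x y : T, x != y -> exists2 X, X \in A & (x \in X) != (y \in X).

Definition is_chain C : bool :=
  [forall X in C, forall Y in C, (X != Y) ==> ((X \proper Y) || (Y \proper X))].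

Definition height A : nat := \max_(C in powerset A | is_chain C) #|C|.

(* A_{<x} for x = m/2 : members X with |X| < m/2, i.e. 2|X| < m *)
Definition A_lt_half A (m : nat) : {set {set T}} := [set X in A | #|X|.*2 < m].

Definition irr S X : {set T} := [set s in X | s \notin base (S :\ X)].

Definition irredundant S : Prop := forall X, X \in S -> irr S X != set0.

Definition is_calB A (m : nat) S : Prop :=
  [/\ S \subset A_lt_half A m, irredundant S,
      base S = base (A_lt_half A m) &
      forall S', S' \subset A_lt_half A m -> irredundant S' ->
                 base S' = base (A_lt_half A m) -> #|S| <= #|S'| ].
End UC.

(* A point outside every irr(B_i) is covered twice by the B_i, a point inside
   at least once; counting with multiplicity gives
   2n <= |irr(B_1) u irr(B_2) u irr(B_3)| + |B_1| + |B_2| + |B_3|.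
   As each |B_i| < n/2, the union of the irreducible parts has more than n/2
   elements, so it cannot fit into any member of A_{<n/2}. *)
From mathcomp Require Import all_boot.
From mathcomp Require Import zify.

Set Implicit Arguments.
Unset Strict Implicit.
Unset Printing Implicit Defensive.

Lemma sum_mem_card (T : finType) (U : {set T}) :
  \sum_(x : T) (x \in U : nat) = #|U|.
Proof.
rewrite -sum1_card [RHS]big_mkcond /=; apply: eq_bigr => x _.
by case: (x \in U).
Qed.

Section IrredundantCover.
Variables (T : finType) (S : {set {set T}}).

Let U := \bigcup_(B in S) irr S B.

Lemma mem_base_irr_count x :
  x \in base S -> 2 <= (x \in U) + \sum_(B in S) (x \in B).
Proof.
case/bigcupP => B BS xB; rewrite (bigD1 B) //= xB.
case xIB: (x \in irr S B).
  have -> : x \in U by apply/bigcupP; exists B.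
  lia.
move: xIB; rewrite inE xB /= => /negbFE /bigcupP [C].
rewrite !inE => /andP [CB CS] xC.
rewrite (bigD1 C) /=; last by rewrite CS.
rewrite xC; lia.
Qed.

Lemma card_irr_cover :
  base S = setT -> #|T|.*2 <= #|U| + \sum_(B in S) #|B|.
Proof.
move=> bS.
have : \sum_(x : T) 2 <= \sum_(x : T) ((x \in U) + \sum_(B in S) (x \in B)).
  by apply: leq_sum => x _; apply: mem_base_irr_count; rewrite bS inE.
rewrite sum_nat_const cardT -cardT muln2 big_split /= sum_mem_card.
by rewrite exchange_big /=; under eq_bigr do rewrite sum_mem_card.
Qed.

End IrredundantCover.

Lemma base_calB_full (n : nat) (A S : {set {set 'I_n}}) :
  is_calB A n S -> #|base (A_lt_half A n)| = n -> base S = setT.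
Proof.
case=> _ _ -> _ cB.
by apply/eqP; rewrite eqEcard subsetT /= cardsT card_ord cB.
Qed.

Lemma sum_card_lt_half (n : nat) (A S : {set {set 'I_n}}) :
  S \subset A_lt_half A n -> (\sum_(B in S) #|B|).*2 <= #|S| * n.-1.
Proof.
move=> sSA; rewrite -sum_nat_const (big_morph double doubleD double0).
apply: leq_sum => B /(subsetP sSA); rewrite inE => /andP [_]; lia.
Qed.

Theorem propositionG (n : nat) (A S : {set {set 'I_n}}) :
  union_closed A -> base A = [set: 'I_n] -> separating A -> height A = 4 ->
  is_calB A n S -> #|S| = 3 ->
  #|base (A_lt_half A n)| = n ->
  forall X, X \in A_lt_half A n :\: S ->
    ~ (\bigcup_(Bi in S) irr S Bi \subset X).
Proof.
move=> _ _ _ _ calB cS cB X XS sUX.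
have [sSA _ _ _] := calB.
have cover := card_irr_cover (base_calB_full calB cB).
have sizeB := sum_card_lt_half sSA.
have sizeU := subset_leq_card sUX.
move: XS; rewrite !inE => /andP [_ /andP [_ sizeX]].
rewrite card_ord cS in cover sizeB; lia.
Qed.
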